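(* Let $m$ be a positive integer and let $\phi_m$ be the unique root of $\phi^{m+1}+\phi^m-1=0$ in $(0,1)$. Then $\theta=\phi_m^2$ is the unique solution in $(0,1)$ of the equation $L_m(\theta)=L_{m+1}(\theta)$.
   Context: $\lg$ denotes $\log_2$. For a positive integer $m$ and $0<\theta<1$, $$L_m(\theta)=\begin{cases}1+\lg m+\dfrac{\theta^{m/2}}{1-\theta^{m/2}}, & m=2^\beta \text{ for some integer } \beta\ge0,\\[2mm] 1+\lfloor\lg m\rfloor+\dfrac{\theta^{(2^{\lceil\lg m\rceil}-m)/2}}{1-\theta^{m/2}}, & \text{otherwise.}\end{cases}$$ (This is the asymptotic average code length of the modified Rice-Golomb code with parameter $m$ for Laplace-distributed residuals with parameter $\theta$.) *)

From mathcomp Require Import all_boot all_order all_algebra.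
From mathcomp Require Import all_classical all_reals all_analysis.
Set Implicit Arguments. Unset Strict Implicit. Unset Printing Implicit Defensive.
Import Order.TTheory GRing.Theory Num.Theory.
Local Open Scope ring_scope.

Definition lg {R : realType} (x : R) : R := ln x / ln 2.

(* L_m(theta): asymptotic average code length of the modified Rice-Golomb code *)
Definition L {R : realType} (m : nat) (theta : R) : R :=
  if `[< exists beta : nat, m = (2 ^ beta)%N >] then
    1 + lg (m%:R) + theta `^ (m%:R / 2) / (1 - theta `^ (m%:R / 2))
  else
    1 + (Num.floor (lg (m%:R : R)))%:~R
      + theta `^ (((2 : R) ^ Num.ceil (lg (m%:R : R)) - m%:R) / 2)
        / (1 - theta `^ (m%:R / 2)).

From mathcomp Require Import all_boot all_order all_algebra.
From mathcomp Require Import all_classical all_reals all_analysis.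
From mathcomp Require Import ring lra zify.
Set Implicit Arguments.
Unset Strict Implicit.
Unset Printing Implicit Defensive.

Import Order.TTheory GRing.Theory Num.Theory.
Local Open Scope ring_scope.

(* Substituting theta = t^2 turns every power theta^(x/2) in L into an
   integer power of t, and both branches of the definition collapse to
   L_n(t^2) = 1 + k + t^(2^(k+1) - n) / (1 - t^n) for any k with
   2^k <= n <= 2^(k+1).  Taking k = floor(lg m), which suits both m and m+1,
   L_(m+1)(t^2) - L_m(t^2) factors as
   t^e (1 - t) (1 - t^m - t^(m+1)) / ((1 - t^m) (1 - t^(m+1))),
   whose only zero in (0,1) is the root of t^(m+1) + t^m = 1. *)

Section CodeLength.
Variable R : realType.

Lemma lg_expn2 (k : nat) : lg ((2 ^ k)%N%:R : R) = k%:R.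
Proof.
have ln2_neq0 : ln (2 : R) != 0 by rewrite gt_eqF // ln_gt0 ?ltr1n.
by rewrite /lg natrX lnXn ?ltr0n // -[_ *+ k]mulr_natr mulrAC divff ?mul1r.
Qed.

Lemma lg_lt (x y : R) : 0 < x -> x < y -> lg x < lg y.
Proof.
have ln2_gt0 : 0 < ln (2 : R) by rewrite ln_gt0 // ltr1n.
move=> x_gt0 xy; rewrite /lg ltr_pM2r ?invr_gt0 //.
by rewrite ltr_ln // posrE (lt_trans x_gt0 xy).
Qed.

Lemma lg_between (k n : nat) : (2 ^ k < n < 2 ^ k.+1)%N ->
  k%:R < lg (n%:R : R) < k.+1%:R.
Proof.
move=> /andP[lo hi]; rewrite -(lg_expn2 k) -(lg_expn2 k.+1).
by rewrite !lg_lt ?ltr_nat ?ltr0n ?expn_gt0 // (leq_ltn_trans _ lo).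
Qed.

Lemma powR_sqr_half (t : R) (n : nat) : 0 <= t -> (t ^+ 2) `^ (n%:R / 2) = t ^+ n.
Proof.
move=> t_ge0.
by rewrite -powR_mulrn // -powRrM mulrCA divff ?mulr1 ?powR_mulrn.
Qed.

Lemma L_sqr_expn2 (k : nat) (t : R) : 0 <= t ->
  L (2 ^ k) (t ^+ 2) = 1 + k%:R + t ^+ (2 ^ k) / (1 - t ^+ (2 ^ k)).
Proof.
move=> t_ge0; rewrite /L asboolT; last by exists k.
by rewrite lg_expn2 !powR_sqr_half.
Qed.

Lemma L_sqr_between (k n : nat) (t : R) : 0 <= t -> (2 ^ k < n < 2 ^ k.+1)%N ->
  L n (t ^+ 2) = 1 + k%:R + t ^+ (2 ^ k.+1 - n) / (1 - t ^+ n).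
Proof.
move=> t_ge0 n_btw; rewrite /L asboolF; last first.
  by move=> [b n_eq]; move: n_btw; rewrite n_eq !ltn_exp2l //; lia.
have /andP[lg_lo lg_hi] := lg_between n_btw.
have -> : Num.floor (lg (n%:R : R)) = k.
  by apply: floor_def; rewrite intrD -!pmulrn natr1 (ltW lg_lo).
have -> : Num.ceil (lg (n%:R : R)) = k.+1.
  by apply: ceil_def; rewrite -[k.+1]addn1 PoszD addrK -!pmulrn addn1 lg_lo ltW.
have -> : (2 : R) ^ (k.+1 : int) - n%:R = (2 ^ k.+1 - n)%N%:R.
  by rewrite natrB ?natrX // ltnW //; case/andP: n_btw.
by rewrite !powR_sqr_half.
Qed.

Lemma one_sub_expr_neq0 (t : R) (n : nat) : 0 <= t < 1 -> (0 < n)%N ->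
  1 - t ^+ n != 0.
Proof.
by move=> /andP[t_ge0 t_lt1] n_gt0; rewrite subr_eq0 gt_eqF // expr_lt1.
Qed.

(* At the upper end n = 2^(k+1) this is the power-of-two branch with k+1 in
   place of k, rewritten via 1 + x / (1 - x) = 1 / (1 - x). *)
Lemma L_sqr (k n : nat) (t : R) : 0 <= t < 1 -> (2 ^ k <= n <= 2 ^ k.+1)%N ->
  L n (t ^+ 2) = 1 + k%:R + t ^+ (2 ^ k.+1 - n) / (1 - t ^+ n).
Proof.
move=> t01 /andP[n_lo n_hi]; have t_ge0 : 0 <= t by case/andP: t01.
case: (ltngtP n (2 ^ k.+1)) n_hi => // [n_lt _ | ->{n n_lo} _]; last first.
  have := one_sub_expr_neq0 t01 (expn_gt0 2 k.+1).
  by rewrite L_sqr_expn2 // subnn expr0 -natr1 => ?; field.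
case: (ltngtP (2 ^ k) n) n_lo => // [n_gt _ | <- _].
  by rewrite (L_sqr_between (k := k)) // n_gt n_lt.
by rewrite L_sqr_expn2 // expnS mul2n -addnn addnK.
Qed.

Lemma L_succ_sub_sqr (m : nat) (t : R) : (0 < m)%N -> 0 <= t < 1 ->
  exists e : nat, L m.+1 (t ^+ 2) - L m (t ^+ 2) =
    t ^+ e * (1 - t) * (1 - t ^+ m - t ^+ m.+1) / ((1 - t ^+ m) * (1 - t ^+ m.+1)).
Proof.
move=> m_gt0 t01; set k := trunc_log 2 m.
have m_lo : (2 ^ k <= m)%N by apply: trunc_logP.
have m_hi : (m < 2 ^ k.+1)%N by apply: trunc_log_ltn.
have tm_neq1 := one_sub_expr_neq0 t01 m_gt0.
have tmS_neq1 := one_sub_expr_neq0 t01 (ltn0Sn m).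
exists (2 ^ k.+1 - m.+1)%N.
rewrite (L_sqr (k := k) t01) ?leqW ?m_lo //.
rewrite (L_sqr (k := k) t01) ?m_lo ?(ltnW m_hi) //.
rewrite -(subnSK m_hi) !exprS in tmS_neq1 *.
by field; rewrite tm_neq1 tmS_neq1.
Qed.

Lemma L_sqr_succ_eqE (m : nat) (t : R) : (0 < m)%N -> 0 < t < 1 ->
  (L m.+1 (t ^+ 2) == L m (t ^+ 2)) = (t ^+ m.+1 + t ^+ m == 1).
Proof.
move=> m_gt0 /andP[t_gt0 t_lt1]; have t01 : 0 <= t < 1 by rewrite ltW.
have [e L_sub] := L_succ_sub_sqr m_gt0 t01.
rewrite -subr_eq0 L_sub mulf_eq0 invr_eq0 !mulf_eq0 expf_eq0 (gt_eqF t_gt0) andbF.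
rewrite (negbTE (one_sub_expr_neq0 t01 m_gt0)).
rewrite (negbTE (one_sub_expr_neq0 t01 (ltn0Sn m))).
rewrite (negbTE (one_sub_expr_neq0 t01 (ltn0Sn 0)) : (1 - t == 0) = false) /= orbF.
by apply/eqP/eqP; lra.
Qed.

Lemma exprS_addr_lt (m : nat) (s t : R) : 0 <= s -> s < t ->
  s ^+ m.+1 + s ^+ m < t ^+ m.+1 + t ^+ m.
Proof.
move=> s_ge0 st; have t_ge0 : 0 <= t by rewrite (le_trans s_ge0) ?ltW.
apply: ltr_leD; first by rewrite ltrXn2r.
by apply: lerXn2r; rewrite ?nnegrE // ltW.
Qed.

Lemma exprS_addr_inj (m : nat) :
  {in Num.nneg &, injective (fun t : R => t ^+ m.+1 + t ^+ m)}.
Proof.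
move=> s t; rewrite !nnegrE => s_ge0 t_ge0 /= st.
case: (ltgtP s t) => // [lt_st | lt_ts].
  by move: (exprS_addr_lt m s_ge0 lt_st); rewrite st ltxx.
by move: (exprS_addr_lt m t_ge0 lt_ts); rewrite st ltxx.
Qed.

End CodeLength.

Theorem lemma3 (R : realType) (m : nat) (phi : R) :
  (0 < m)%N ->
  0 < phi < 1 -> phi ^+ m.+1 + phi ^+ m - 1 = 0 ->
  (0 < phi ^+ 2 < 1 /\ L m (phi ^+ 2) = L m.+1 (phi ^+ 2)) /\
  (forall theta : R, 0 < theta < 1 -> L m theta = L m.+1 theta -> theta = phi ^+ 2).
Proof.
move=> m_gt0 phi01 phi_root.
have phi2_01 : 0 < phi ^+ 2 < 1.
  by case/andP: phi01 => phi_gt0 phi_lt1; rewrite exprn_gt0 // expr_lt1 ?ltW.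
split.
  split=> //; apply/esym/eqP; rewrite L_sqr_succ_eqE //.
  by apply/eqP; lra.
move=> theta /andP[theta_gt0 theta_lt1] L_eq.
set t := Num.sqrt theta.
have theta_sqr : theta = t ^+ 2 by rewrite sqr_sqrtr ?ltW.
have t01 : 0 < t < 1 by rewrite sqrtr_gt0 theta_gt0 /= -sqrtr1 ltr_sqrt.
have /eqP t_root : t ^+ m.+1 + t ^+ m == 1.
  by rewrite -L_sqr_succ_eqE // -theta_sqr L_eq.
rewrite theta_sqr; congr (_ ^+ 2).
apply: (exprS_addr_inj (m := m)); rewrite ?nnegrE /=.
- by case/andP: t01 => /ltW.
- by case/andP: phi01 => /ltW.
- lra.
Qed.
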